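(* Let $a>1$, $k\geq0$, $n\geq1$, $C_j(n,a)=\binom{n}{j}\left(\frac{1+a}{2}\right)^{n-j}\left(\frac{1-a}{2}\right)^j$, and $\mathtt{H}_{k,n}(x)=h_k(x)\sum_{j=0}^nC_j(n,a)e^{i(1-\frac{2j}{n})x}$. With $e_k(z)=z^k/\sqrt{k!}$ and $b_j=-\frac{i}{\sqrt2}(1-\frac{2j}{n})$, $$\mathcal{B}(\mathtt{H}_{k,n})(z)=\sum_{j=0}^nC_j(n,a)k_{b_j}(z)e_k(z-b_j)=\sum_{j=0}^nC_j(n,a)\mathcal{W}_{b_j}[e_k](z),\quad z\in\mathbb{C}.$$
   Context: $h_k$ are the normalized Hermite functions, $h_k(x)=(2^kk!\sqrt\pi)^{-1/2}H_k(x)e^{-x^2/2}$ with $H_k$ the Hermite polynomials. $\mathcal{B}(\varphi)(z)=\pi^{-1/4}\int_{\mathbb{R}}e^{-\frac12(z^2+x^2)+\sqrt2 zx}\varphi(x)\,dx$ is the Segal-Bargmann transform. $k_w(z)=e^{z\overline w-|w|^2/2}$ is the normalized Fock kernel, and for $b\in\mathbb{C}$ the Weyl operator on the Fock space is $\mathcal{W}_bf(z)=f(z-b)k_b(z)$. *)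

From Stdlib Require Import Reals.
From Coquelicot Require Import Coquelicot.
Open Scope R_scope.

(* Physicists' Hermite polynomials: H_0 = 1, H_1 = 2x,
   H_{k+2} = 2x H_{k+1} - 2(k+1) H_k.  hermite2 k x = (H_k x, H_{k+1} x). *)
Fixpoint hermite2 (k : nat) (x : R) : R * R :=
  match k with
  | O => (1, 2 * x)
  | S k' => let (p, q) := hermite2 k' x in (q, 2 * x * q - 2 * INR (S k') * p)
  end.
Definition hermite (k : nat) (x : R) : R := fst (hermite2 k x).

Definition hermite_fn (k : nat) (x : R) : R :=
  / sqrt (2 ^ k * INR (Factorial.fact k) * sqrt PI) * hermite k x * exp (- (x ^ 2) / 2).

Definition cexp (z : C) : C :=
  (exp (Re z) * cos (Im z), exp (Re z) * sin (Im z)).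

Fixpoint cpow (z : C) (k : nat) : C :=
  match k with O => RtoC 1 | S k' => Cmult z (cpow z k') end.

Definition Ccoef (n : nat) (a : R) (j : nat) : R :=
  Binomial.C n j * ((1 + a) / 2) ^ (n - j) * ((1 - a) / 2) ^ j.

Definition freq (n j : nat) : R := 1 - 2 * INR j / INR n.

Definition Htest (k n : nat) (a : R) (x : R) : C :=
  Cmult (RtoC (hermite_fn k x))
    (sum_n (fun j => Cmult (RtoC (Ccoef n a j)) (cexp (Cmult Ci (RtoC (freq n j * x))))) n).

Definition bargmann_integrand (phi : R -> C) (z : C) (x : R) : C :=
  Cmult (RtoC (Rpower PI (- (1/4))))
    (Cmult (cexp (Cplus (Cmult (RtoC (-1/2)) (Cplus (Cmult z z) (RtoC (x ^ 2))))
                        (Cmult (RtoC (sqrt 2 * x)) z)))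
           (phi x)).

Definition is_bargmann (phi : R -> C) (z v : C) : Prop :=
  is_RInt_gen (bargmann_integrand phi z) (Rbar_locally m_infty) (Rbar_locally p_infty) v.

Definition fock_kernel (w z : C) : C :=
  cexp (Cminus (Cmult z (Cconj w)) (RtoC (Cmod w ^ 2 / 2))).

Definition ek (k : nat) (z : C) : C :=
  Cmult (cpow z k) (RtoC (/ sqrt (INR (Factorial.fact k)))).

Definition weyl (b : C) (f : C -> C) (z : C) : C :=
  Cmult (f (Cminus z b)) (fock_kernel b z).

Definition bj (n j : nat) : C :=
  Cmult (Copp (Cmult Ci (RtoC (/ sqrt 2)))) (RtoC (freq n j)).

From Stdlib Require Import Reals Lra Lia.
From Coquelicot Require Import Coquelicot.
Open Scope R_scope.

(* Completing the square turns the Bargmann integrand of [h_k(x) e^{iwx}] into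
   [k_b(z)] times [H_k(x) e^{-(x-c)^2}] (up to constants), with [b = -iw/sqrt 2] and
   [c = (z-b)/sqrt 2].  The moments [int H_k(x) e^{-(x-c)^2} dx = sqrt pi (2c)^k] follow by
   induction on [k]: for [k = 0], [s |-> int e^{-(x-sc)^2} dx] has an [s]-derivative that
   is a boundary term vanishing at infinity, so it keeps the value [sqrt pi] of the real
   Gaussian integral; and [H_{k+1} = 2x H_k - H_k'] integrated by parts gives the factor
   [2c].  The corollary is the linear combination of these identities over [j]. *)

Lemma exp_le_compat (x y : R) : x <= y -> exp x <= exp y.
Proof. intros [Hlt | ->]; [left; apply exp_increasing, Hlt | right; reflexivity]. Qed.

Lemma ex_RInt_derivable (f : R -> R) (a b : R) :
  (forall x, ex_derive f x) -> ex_RInt f a b.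
Proof.
  intros Hf. apply (ex_RInt_continuous (V := R_CompleteNormedModule)).
  intros x _. apply (ex_derive_continuous (V := R_NormedModule)), Hf.
Qed.

Lemma is_derive_RInt_param_global (f df : R -> R -> R) (a b t : R) :
  (forall s x, is_derive (fun s => f s x) s (df s x)) ->
  (forall s x, continuity_2d_pt df s x) ->
  (forall s, ex_RInt (f s) a b) ->
  is_derive (fun s => RInt (f s) a b) t (RInt (df t) a b).
Proof.
  intros Hd Hc Hint.
  rewrite (RInt_ext (df t) (fun x => Derive (fun s => f s x) t))
    by (intros x _; symmetry; apply is_derive_unique, Hd).
  apply is_derive_RInt_param.
  - apply filter_forall. intros s x _. eexists. apply Hd.
  - intros x _. eapply continuity_2d_pt_ext; [| apply (Hc t x)].
    intros s y. symmetry. apply is_derive_unique, Hd.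
  - apply filter_forall. exact Hint.
Qed.

Lemma is_RInt_product_rule (f g df dg : R -> R) (a b : R) :
  (forall x, is_derive f x (df x)) -> (forall x, is_derive g x (dg x)) ->
  (forall x, ex_derive df x) -> (forall x, ex_derive dg x) ->
  is_RInt (fun x => df x * g x + f x * dg x) a b (f b * g b - f a * g a).
Proof.
  intros Hf Hg Hdf Hdg.
  apply (is_RInt_derive (V := R_CompleteNormedModule) (fun x => f x * g x)).
  - intros x _. apply (is_derive_mult (K := R_AbsRing) f g); [apply Hf | apply Hg | apply Rmult_comm].
  - intros x _. apply (ex_derive_continuous (V := R_NormedModule)).
    apply (ex_derive_plus (V := R_NormedModule)); apply ex_derive_mult;
      first [apply Hdf | apply Hdg | eexists; apply Hf | eexists; apply Hg].
Qed.

Ltac continuity_2d :=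
  repeat first
    [ apply continuity_2d_pt_const | apply continuity_2d_pt_id1 | apply continuity_2d_pt_id2
    | apply continuity_2d_pt_mult | apply continuity_2d_pt_plus | apply continuity_2d_pt_minus
    | apply continuity_2d_pt_opp | apply continuity_2d_pt_inv
    | apply continuity_1d_2d_pt_comp;
      [ first [ apply derivable_continuous_pt, derivable_pt_exp
              | apply continuity_cos | apply continuity_sin ] |] ].

(** * Decay at infinity and boundary terms *)

Definition vanishes_at_infinity {V : NormedModule R_AbsRing} (f : R -> V) : Prop :=
  forall eps : R, 0 < eps -> exists M : R, forall x : R, M <= Rabs x -> norm (f x) < eps.

Lemma vanishes_at_infinity_le {V : NormedModule R_AbsRing} (f : R -> V) (g : R -> R) :
  (forall x, norm (f x) <= g x) -> vanishes_at_infinity g -> vanishes_at_infinity f.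
Proof.
  intros Hfg Hg eps Heps.
  destruct (Hg eps Heps) as [M HM].
  exists M. intros x Hx.
  apply (Rle_lt_trans _ (g x)); [apply Hfg|].
  apply (Rle_lt_trans _ (Rabs (g x))); [apply Rle_abs | apply HM, Hx].
Qed.

Lemma vanishes_exp_quadratic (A K C : R) :
  vanishes_at_infinity (fun x => A * exp (K * Rabs x - x ^ 2 / 2 + C)).
Proof.
  intros eps Heps.
  set (Q := 4 * (Rabs A / eps + K ^ 2 + Rabs C)).
  assert (HQ : 0 <= Q).
  { assert (0 <= Rabs A / eps) by (apply Rdiv_le_0_compat; [apply Rabs_pos | lra]).
    pose proof (Rabs_pos C). unfold Q. nra. }
  exists (Q + 1). intros x Hx.
  change (norm _) with (Rabs (A * exp (K * Rabs x - x ^ 2 / 2 + C))).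
  set (T := x ^ 2 / 2 - K * Rabs x - C).
  replace (K * Rabs x - x ^ 2 / 2 + C) with (- T) by (unfold T; ring).
  rewrite exp_Ropp, Rabs_mult, Rabs_inv, (Rabs_right (exp T)) by (left; apply exp_pos).
  (* T grows quadratically, so [exp T >= T] eventually exceeds |A| / eps *)
  assert (HT : Rabs A / eps < T).
  { assert (Hx2 : x ^ 2 = Rabs x * Rabs x) by (rewrite <- Rabs_mult, Rabs_right; [ring | nra]).
    assert (HxQ : Q < x ^ 2) by (rewrite Hx2; nra).
    pose proof (Rle_abs C). pose proof (pow2_ge_0 (Rabs x / 2 - K)).
    unfold T, Q in *. nra. }
  pose proof (exp_ineq1_le T). pose proof (exp_pos T).
  apply (Rmult_lt_reg_r (exp T)); [lra|].
  rewrite Rmult_assoc, Rinv_l, Rmult_1_r by lra.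
  assert (Rabs A = Rabs A / eps * eps) by (field; lra).
  nra.
Qed.

Lemma is_RInt_gen_boundary {V : NormedModule R_AbsRing} (f g H : R -> V) (l : V) :
  vanishes_at_infinity H ->
  (forall a b I, is_RInt g a b I -> is_RInt f a b (plus I (minus (H b) (H a)))) ->
  is_RInt_gen g (Rbar_locally m_infty) (Rbar_locally p_infty) l ->
  is_RInt_gen f (Rbar_locally m_infty) (Rbar_locally p_infty) l.
Proof.
  intros HH Hfg Hg P HP.
  apply locally_norm_le_locally in HP. destruct HP as [eps HP].
  pose proof (Hg _ (locally_le_locally_norm _ _ (locally_norm_ball_norm l (pos_div_2 eps)))) as Hg'.
  destruct (HH (eps / 4)) as [M HM]; [destruct eps; simpl; lra|].
  assert (Hfar : filter_prod (Rbar_locally m_infty) (Rbar_locally p_infty)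
                   (fun ab => fst ab < - M /\ M < snd ab)).
  { apply (Filter_prod _ _ _ (fun a => a < - M) (fun b => M < b)).
    - exists (- M). auto.
    - exists M. auto.
    - simpl. auto. }
  unfold filtermapi in Hg'.
  eapply (filter_imp (F := filter_prod (Rbar_locally m_infty) (Rbar_locally p_infty)));
    [| exact (filter_and _ _ Hg' Hfar)].
  intros [a b] [[I [HI Hball]] [Ha Hb]]. simpl in *.
  exists (plus I (minus (H b) (H a))). split; [apply Hfg, HI|].
  apply HP. unfold ball_norm in *.
  assert (Hd : norm (minus (H b) (H a)) < eps / 2).
  { apply (Rle_lt_trans _ (norm (H b) + norm (opp (H a)))); [apply norm_triangle|].
    rewrite norm_opp.
    assert (norm (H b) < eps / 4) by (apply HM; pose proof (Rle_abs b); lra).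
    assert (norm (H a) < eps / 4) by (apply HM; pose proof (Rabs_maj2 a); lra).
    lra. }
  set (d := minus (H b) (H a)) in *.
  replace (minus (plus I d) l) with (plus (minus I l) d).
  - apply (Rle_lt_trans _ _ _ (norm_triangle _ _)). simpl in Hball. lra.
  - unfold minus. rewrite <- !plus_assoc. f_equal. apply plus_comm.
Qed.




(** * The Gaussian integral *)

Definition gauss (x : R) : R := exp (- x ^ 2).

Definition gauss_partial (t : R) : R := RInt gauss 0 t.

Definition gauss_tail (t : R) : R :=
  RInt (fun x => exp (- (t ^ 2 * (1 + x ^ 2))) / (1 + x ^ 2)) 0 1.

Lemma one_plus_sq_pos (x : R) : 0 < 1 + x ^ 2.
Proof. pose proof (pow2_ge_0 x). lra. Qed.

Lemma ex_RInt_gauss (a b : R) : ex_RInt gauss a b.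
Proof. apply ex_RInt_derivable. intros x. unfold gauss. auto_derive. easy. Qed.

Lemma is_derive_gauss_partial (t : R) : is_derive gauss_partial t (gauss t).
Proof.
  apply is_derive_RInt with 0.
  - apply filter_forall. intros b. apply (RInt_correct (V := R_CompleteNormedModule)), ex_RInt_gauss.
  - apply (ex_derive_continuous (V := R_NormedModule)). unfold gauss. auto_derive. easy.
Qed.

Lemma gauss_partial_scaled (t : R) :
  RInt (fun x => t * exp (- (t * x) ^ 2)) 0 1 = gauss_partial t.
Proof.
  apply (is_RInt_unique (V := R_CompleteNormedModule)).
  apply (is_RInt_ext (fun x => scal t (gauss (t * x + 0)))).
  { intros x _. unfold gauss. rewrite Rplus_0_r. reflexivity. }
  apply (is_RInt_comp_lin gauss t 0 0 1).
  rewrite Rmult_0_r, Rmult_1_r, !Rplus_0_r.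
  apply (RInt_correct (V := R_CompleteNormedModule)), ex_RInt_gauss.
Qed.

Lemma is_derive_gauss_tail (t : R) :
  is_derive gauss_tail t (-2 * gauss t * gauss_partial t).
Proof.
  unfold gauss_tail.
  replace (-2 * gauss t * gauss_partial t)
    with (RInt (fun x => -2 * t * exp (- (t ^ 2 * (1 + x ^ 2)))) 0 1).
  - apply (is_derive_RInt_param_global
             (fun s x => exp (- (s ^ 2 * (1 + x ^ 2))) / (1 + x ^ 2))
             (fun s x => -2 * s * exp (- (s ^ 2 * (1 + x ^ 2))))).
    + intros s x. pose proof (one_plus_sq_pos x).
      auto_derive; [lra|]. simpl in *. field. lra.
    + intros s x. continuity_2d.
    + intros s. apply ex_RInt_derivable. intros x. pose proof (one_plus_sq_pos x).
      auto_derive. lra.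
  - rewrite <- gauss_partial_scaled.
    rewrite <- (RInt_scal (V := R_CompleteNormedModule)).
    + apply RInt_ext. intros x _. unfold gauss, scal. simpl. unfold mult. simpl.
      replace (- (t * (t * 1) * (1 + x * (x * 1))))
        with (- (t * (t * 1)) + - (t * x * (t * x * 1))) by ring.
      rewrite exp_plus. ring.
    + apply ex_RInt_derivable. intros x. auto_derive. easy.
Qed.

Lemma gauss_tail_0 : gauss_tail 0 = PI / 4.
Proof.
  unfold gauss_tail.
  rewrite (RInt_ext _ (fun x => / (1 + x ^ 2))).
  2: { intros x _. rewrite pow_i, Rmult_0_l, Ropp_0, exp_0 by lia. apply Rmult_1_l. }
  replace (PI / 4) with (atan 1 - atan 0) by (rewrite atan_1, atan_0; ring).
  apply (is_RInt_unique (V := R_CompleteNormedModule)).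
  apply (is_RInt_derive (V := R_CompleteNormedModule)).
  - intros x _. apply is_derive_Reals, derivable_pt_lim_atan.
  - intros x _. apply (ex_derive_continuous (V := R_NormedModule)).
    pose proof (one_plus_sq_pos x). auto_derive. lra.
Qed.

(* The classical trick: [gauss_partial t ^ 2 + gauss_tail t] has zero derivative. *)
Lemma gauss_partial_sq_plus_tail (t : R) :
  0 <= t -> gauss_partial t ^ 2 + gauss_tail t = PI / 4.
Proof.
  intros [Ht | <-].
  - rewrite <- gauss_tail_0.
    replace (gauss_tail 0) with (gauss_partial 0 ^ 2 + gauss_tail 0)
      by (unfold gauss_partial; rewrite RInt_point; simpl; unfold zero; simpl; ring).
    symmetry. apply (eq_is_derive (V := R_NormedModule) (fun s => gauss_partial s ^ 2 + gauss_tail s)); [|lra].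
    intros s _.
    replace (@zero R_NormedModule)
      with (INR 2 * gauss s * gauss_partial s ^ Nat.pred 2 + -2 * gauss s * gauss_partial s)
      by (unfold zero; simpl; ring).
    apply (is_derive_plus (V := R_NormedModule)); [| apply is_derive_gauss_tail].
    apply (is_derive_pow (fun s => gauss_partial s) 2 s), is_derive_gauss_partial.
  - unfold gauss_partial. rewrite RInt_point, gauss_tail_0. simpl. unfold zero; simpl. ring.
Qed.

Lemma gauss_partial_ge_0 (t : R) : 0 <= t -> 0 <= gauss_partial t.
Proof.
  intros Ht. apply RInt_ge_0; [exact Ht | apply ex_RInt_gauss |].
  intros x _. left. apply exp_pos.
Qed.

Lemma gauss_tail_bounds (t : R) : 0 <= gauss_tail t <= gauss t.
Proof.
  assert (Hint : ex_RInt (fun x => exp (- (t ^ 2 * (1 + x ^ 2))) / (1 + x ^ 2)) 0 1).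
  { apply ex_RInt_derivable. intros x. pose proof (one_plus_sq_pos x). auto_derive. lra. }
  split.
  - apply RInt_ge_0; [lra | exact Hint |].
    intros x _. left. apply Rdiv_lt_0_compat; [apply exp_pos | apply one_plus_sq_pos].
  - replace (gauss t) with (RInt (fun _ => gauss t) 0 1)
      by (rewrite RInt_const; unfold scal; simpl; unfold mult; simpl; ring).
    apply RInt_le; [lra | exact Hint | apply ex_RInt_const |].
    intros x _. unfold gauss.
    assert (Hle : exp (- (t ^ 2 * (1 + x ^ 2))) <= exp (- t ^ 2)).
    { apply exp_le_compat. pose proof (pow2_ge_0 t). pose proof (pow2_ge_0 x). nra. }
    pose proof (exp_pos (- (t ^ 2 * (1 + x ^ 2)))). pose proof (pow2_ge_0 x).
    apply (Rle_trans _ (exp (- (t ^ 2 * (1 + x ^ 2))))); [| exact Hle].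
    apply Rmult_le_reg_r with (1 + x ^ 2); [lra|].
    unfold Rdiv. rewrite Rmult_assoc, Rinv_l by lra. nra.
Qed.

Lemma gauss_partial_opp (t : R) : gauss_partial (- t) = - gauss_partial t.
Proof.
  unfold gauss_partial.
  assert (Hsub : is_RInt (fun x => scal (-1) (gauss (-1 * x + 0))) 0 t (RInt gauss 0 (- t))).
  { apply (is_RInt_comp_lin (V := R_NormedModule)).
    replace (-1 * 0 + 0) with 0 by ring. replace (-1 * t + 0) with (- t) by ring.
    apply (RInt_correct (V := R_CompleteNormedModule)), ex_RInt_gauss. }
  rewrite <- (is_RInt_unique (V := R_CompleteNormedModule) _ _ _ _ Hsub).
  rewrite (RInt_ext _ (fun x => opp (gauss x))).
  - apply (RInt_opp (V := R_CompleteNormedModule)), ex_RInt_gauss.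
  - intros x _. unfold gauss, scal, opp. simpl. unfold mult. simpl.
    replace ((-1 * x + 0) * ((-1 * x + 0) * 1)) with (x * (x * 1)) by ring. ring.
Qed.

Lemma gauss_partial_near_p_infty (eps : R) :
  0 < eps -> exists M, forall t, M <= t -> Rabs (gauss_partial t - sqrt PI / 2) < eps.
Proof.
  intros Heps.
  set (s := sqrt PI / 2).
  assert (Hs : 0 < s) by (unfold s; pose proof (sqrt_lt_R0 PI PI_RGT_0); lra).
  destruct (vanishes_exp_quadratic 1 0 0 (eps * s)) as [M HM]; [nra|].
  exists (Rmax M 0). intros t Ht.
  pose proof (Rmax_l M 0). pose proof (Rmax_r M 0).
  assert (Hgauss : gauss t < eps * s).
  { apply (Rle_lt_trans _ (Rabs (1 * exp (0 * Rabs t - t ^ 2 / 2 + 0)))).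
    - rewrite Rabs_right by (left; rewrite Rmult_1_l; apply exp_pos).
      rewrite Rmult_1_l. apply exp_le_compat. pose proof (pow2_ge_0 t). lra.
    - apply HM. rewrite Rabs_right; lra. }
  assert (Hss : s * s = PI / 4)
    by (unfold s; pose proof PI_RGT_0; field_simplify; rewrite pow2_sqrt; lra).
  pose proof (gauss_partial_sq_plus_tail t ltac:(lra)) as Hsum.
  pose proof (gauss_tail_bounds t). pose proof (gauss_partial_ge_0 t ltac:(lra)).
  assert (Hprod : Rabs (gauss_partial t - s) * (gauss_partial t + s) = gauss_tail t).
  { rewrite <- (Rabs_right (gauss_partial t + s)), <- Rabs_mult by lra.
    rewrite <- Rabs_Ropp, Rabs_right; nra. }
  pose proof (Rabs_pos (gauss_partial t - s)).
  nra.
Qed.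

Lemma gauss_partial_p_infty :
  filterlim gauss_partial (Rbar_locally p_infty) (locally (sqrt PI / 2)).
Proof.
  intros P [eps HP].
  destruct (gauss_partial_near_p_infty eps (cond_pos eps)) as [M HM].
  exists M. intros t Ht. apply HP, HM. lra.
Qed.

Lemma gauss_partial_m_infty :
  filterlim gauss_partial (Rbar_locally m_infty) (locally (- (sqrt PI / 2))).
Proof.
  intros P [eps HP].
  destruct (gauss_partial_near_p_infty eps (cond_pos eps)) as [M HM].
  exists (- M). intros t Ht. apply HP.
  change (Rabs (gauss_partial t - - (sqrt PI / 2)) < eps).
  rewrite <- (Ropp_involutive t), gauss_partial_opp, <- Rabs_Ropp.
  replace (- (- gauss_partial (- t) - - (sqrt PI / 2))) with (gauss_partial (- t) - sqrt PI / 2)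
    by ring.
  apply HM. lra.
Qed.

Theorem is_RInt_gen_gauss :
  is_RInt_gen gauss (Rbar_locally m_infty) (Rbar_locally p_infty) (sqrt PI).
Proof.
  assert (HD : forall x, Derive gauss_partial x = gauss x)
    by (intros x; apply is_derive_unique, is_derive_gauss_partial).
  apply (is_RInt_gen_ext (Derive gauss_partial)).
  { apply filter_forall. intros ab x _. apply HD. }
  replace (sqrt PI) with (sqrt PI / 2 - - (sqrt PI / 2)) by field.
  apply is_RInt_gen_Derive.
  - apply filter_forall. intros ab x _. eexists. apply is_derive_gauss_partial.
  - apply filter_forall. intros ab x _.
    apply (continuous_ext gauss); [intros y; symmetry; apply HD |].
    apply (ex_derive_continuous (V := R_NormedModule)). unfold gauss. auto_derive. easy.
  - exact gauss_partial_m_infty.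
  - exact gauss_partial_p_infty.
Qed.

(** * Hermite polynomials *)

Lemma hermite_0 (x : R) : hermite 0 x = 1.
Proof. reflexivity. Qed.

Lemma hermite_SS (k : nat) (x : R) :
  hermite (S (S k)) x = 2 * x * hermite (S k) x - 2 * INR (S k) * hermite k x.
Proof. unfold hermite. simpl. destruct (hermite2 k x). reflexivity. Qed.

Definition hermite_deriv (k : nat) (x : R) : R :=
  match k with O => 0 | S k' => 2 * INR k * hermite k' x end.

Lemma hermite_S (k : nat) (x : R) :
  hermite (S k) x = 2 * x * hermite k x - hermite_deriv k x.
Proof.
  destruct k as [|k].
  - unfold hermite. simpl. ring.
  - rewrite hermite_SS. reflexivity.
Qed.

Lemma is_derive_hermite (k : nat) (x : R) : is_derive (hermite k) x (hermite_deriv k x).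
Proof.
  assert (Hpair : forall k, (forall x, is_derive (hermite k) x (hermite_deriv k x)) /\
                            (forall x, is_derive (hermite (S k)) x (hermite_deriv (S k) x))).
  { clear k x. induction k as [|k [IHk IHSk]].
    - split; intros x.
      + apply (is_derive_ext (fun _ => 1)); [reflexivity|]. auto_derive; easy.
      + apply (is_derive_ext (fun y => 2 * y)); [intros y; unfold hermite; simpl; ring|].
        auto_derive; [easy|]. simpl. rewrite hermite_0. lra.
    - split; [exact IHSk|]. intros x.
      apply (is_derive_ext (fun y => 2 * y * hermite (S k) y - 2 * INR (S k) * hermite k y));
        [intros y; symmetry; apply hermite_SS|].
      replace (hermite_deriv (S (S k)) x)
        with (minus (plus (mult 2 (hermite (S k) x)) (mult (2 * x) (hermite_deriv (S k) x)))
                    (2 * INR (S k) * hermite_deriv k x)).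
      + apply (is_derive_minus (V := R_NormedModule)).
        * apply (is_derive_mult (fun y => 2 * y) (hermite (S k))); [| apply IHSk | apply Rmult_comm].
          auto_derive; [easy | ring].
        * apply is_derive_scal, IHk.
      + cbn [hermite_deriv]. rewrite (S_INR (S k)). set (m := INR (S k)).
        unfold minus, plus, mult, opp. simpl.
        rewrite (hermite_S k x). ring. }
  apply Hpair.
Qed.

Lemma ex_derive_hermite_deriv (k : nat) (x : R) : ex_derive (hermite_deriv k) x.
Proof.
  destruct k as [|k].
  - apply (ex_derive_ext (fun _ => 0)); [reflexivity|]. auto_derive. easy.
  - eexists. apply is_derive_scal, is_derive_hermite.
Qed.

Lemma hermite_growth (k : nat) :
  exists A, 0 <= A /\ forall x, Rabs (hermite k x) <= A * exp (INR k * Rabs x).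
Proof.
  assert (Hpair : forall k, exists A, 0 <= A /\ forall x,
             Rabs (hermite k x) <= A * exp (INR k * Rabs x) /\
             Rabs (hermite (S k) x) <= A * exp (INR (S k) * Rabs x)).
  { clear k. induction k as [|k [A [HA IH]]].
    - exists 2. split; [lra|]. intros x.
      unfold hermite; simpl. rewrite Rmult_0_l, Rmult_1_l, exp_0, Rabs_R1, Rabs_mult.
      rewrite (Rabs_right 2) by lra.
      pose proof (exp_ineq1_le (Rabs x)). pose proof (Rabs_pos x). split; lra.
    - exists (A * (2 * INR k + 4)). pose proof (pos_INR k).
      split; [nra|]. intros x. destruct (IH x) as [Hk HSk].
      pose proof (Rabs_pos x). pose proof (exp_pos (INR k * Rabs x)).
      pose proof (exp_pos (INR (S k) * Rabs x)).
      assert (Hmono : forall m n, (m <= n)%nat -> exp (INR m * Rabs x) <= exp (INR n * Rabs x)).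
      { intros m n Hmn. apply exp_le_compat, Rmult_le_compat_r; [lra | apply le_INR, Hmn]. }
      assert (Hx : Rabs x * exp (INR (S k) * Rabs x) <= exp (INR (S (S k)) * Rabs x)).
      { rewrite (S_INR (S k)), Rmult_plus_distr_r, Rmult_1_l, exp_plus, Rmult_comm.
        apply Rmult_le_compat_l; [lra|]. pose proof (exp_ineq1_le (Rabs x)). lra. }
      pose proof (Hmono k (S (S k)) ltac:(lia)). pose proof (Hmono (S k) (S (S k)) ltac:(lia)).
      split.
      + apply (Rle_trans _ _ _ HSk). apply Rmult_le_compat_r; [lra | nra].
      + set (E := exp (INR (S (S k)) * Rabs x)) in *.
        assert (F1 : Rabs x * Rabs (hermite (S k) x) <= A * E).
        { apply (Rle_trans _ (Rabs x * (A * exp (INR (S k) * Rabs x)))); [apply Rmult_le_compat_l; lra | nra]. }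
        assert (F2 : INR (S k) * Rabs (hermite k x) <= INR (S k) * (A * E))
          by (apply Rmult_le_compat_l; [apply pos_INR | nra]).
        rewrite hermite_SS.
        apply (Rle_trans _ _ _ (Rabs_triang _ _)). rewrite Rabs_Ropp, !Rabs_mult, (Rabs_right 2) by lra.
        rewrite (Rabs_right (INR (S k))) by (apply Rle_ge, pos_INR).
        rewrite S_INR in F2 |- *. nra. }
  destruct (Hpair k) as [A [HA HAk]]. exists A. split; [exact HA|]. apply HAk.
Qed.

(** * Shifted Gaussians *)

Lemma RInt_homotopy (G P DP : R -> R -> R) (a b : R) :
  (forall s x, is_derive (fun s => G s x) s (DP s x)) ->
  (forall s x, is_derive (P s) x (DP s x)) ->
  (forall s x, continuity_2d_pt DP s x) ->
  (forall s x, ex_derive (DP s) x) ->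
  (forall s x, ex_derive (fun s => P s x) s) ->
  (forall s x, ex_derive (G s) x) ->
  RInt (G 1) a b = RInt (G 0) a b + (RInt (fun s => P s b) 0 1 - RInt (fun s => P s a) 0 1).
Proof.
  intros HGs HPx HDP HDPx HPs HGx.
  assert (Hslice : forall s, is_derive (fun s => RInt (G s) a b) s (P s b - P s a)).
  { intros s.
    replace (P s b - P s a) with (RInt (DP s) a b).
    - apply is_derive_RInt_param_global; [exact HGs | exact HDP |].
      intros t. apply ex_RInt_derivable, HGx.
    - apply (is_RInt_unique (V := R_CompleteNormedModule)), (is_RInt_derive (V := R_CompleteNormedModule)).
      + intros x _. apply HPx.
      + intros x _. apply (ex_derive_continuous (V := R_NormedModule)), HDPx. }
  assert (Hends : is_RInt (fun s => minus (P s b) (P s a)) 0 1 (RInt (G 1) a b - RInt (G 0) a b)).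
  { apply (is_RInt_derive (V := R_CompleteNormedModule) (fun s => RInt (G s) a b));
      [intros s _; apply Hslice |].
    intros s _. apply (ex_derive_continuous (V := R_NormedModule)).
    apply (ex_derive_minus (V := R_NormedModule)); apply HPs. }
  assert (E1 : RInt (fun s => P s b - P s a) 0 1 = RInt (G 1) a b - RInt (G 0) a b)
    by (apply (is_RInt_unique (V := R_CompleteNormedModule)); exact Hends).
  assert (E2 : RInt (fun s => P s b - P s a) 0 1
               = RInt (fun s => P s b) 0 1 - RInt (fun s => P s a) 0 1)
    by (apply (RInt_minus (V := R_CompleteNormedModule));
        apply ex_RInt_derivable; intros s; apply HPs).
  lra.
Qed.

Lemma is_RInt_gen_homotopy (G P DP : R -> R -> R) (envelope : R -> R) (l : R) :
  (forall s x, is_derive (fun s => G s x) s (DP s x)) ->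
  (forall s x, is_derive (P s) x (DP s x)) ->
  (forall s x, continuity_2d_pt DP s x) ->
  (forall s x, ex_derive (DP s) x) ->
  (forall s x, ex_derive (fun s => P s x) s) ->
  (forall s x, ex_derive (G s) x) ->
  (forall s x, 0 <= s <= 1 -> Rabs (P s x) <= envelope x) ->
  vanishes_at_infinity envelope ->
  is_RInt_gen (G 0) (Rbar_locally m_infty) (Rbar_locally p_infty) l ->
  is_RInt_gen (G 1) (Rbar_locally m_infty) (Rbar_locally p_infty) l.
Proof.
  intros HGs HPx HDP HDPx HPs HGx Hbound Henv.
  apply (is_RInt_gen_boundary _ _ (fun x => RInt (fun s => P s x) 0 1)).
  - apply (vanishes_at_infinity_le _ envelope); [| exact Henv].
    intros x. change (Rabs (RInt (fun s => P s x) 0 1) <= envelope x).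
    replace (envelope x) with ((1 - 0) * envelope x) by ring.
    apply abs_RInt_le_const; [lra | apply ex_RInt_derivable; intros s; apply HPs | exact (fun s Hs => Hbound s x Hs)].
  - intros a b I HI.
    rewrite <- (is_RInt_unique (V := R_CompleteNormedModule) _ _ _ _ HI).
    change (is_RInt (G 1) a b
              (RInt (G 0) a b + (RInt (fun s => P s b) 0 1 - RInt (fun s => P s a) 0 1))).
    rewrite <- (RInt_homotopy G P DP) by auto.
    apply (RInt_correct (V := R_CompleteNormedModule)), ex_RInt_derivable, HGx.
Qed.

Section GaussShift.

Variables u v : R.

(* Real and imaginary parts of [exp (-(x - s c)^2)] for [c = u + i v], and their [x]-derivatives. *)
Definition gauss_shift_re (s x : R) : R :=
  exp (- ((x - s * u) * (x - s * u)) + (s * v) * (s * v)) * cos (2 * (s * v) * (x - s * u)).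

Definition gauss_shift_im (s x : R) : R :=
  exp (- ((x - s * u) * (x - s * u)) + (s * v) * (s * v)) * sin (2 * (s * v) * (x - s * u)).

Definition gauss_shift_re_dx (s x : R) : R :=
  exp (- ((x - s * u) * (x - s * u)) + (s * v) * (s * v)) *
  (-2 * (x - s * u) * cos (2 * (s * v) * (x - s * u)) - 2 * (s * v) * sin (2 * (s * v) * (x - s * u))).

Definition gauss_shift_im_dx (s x : R) : R :=
  exp (- ((x - s * u) * (x - s * u)) + (s * v) * (s * v)) *
  (-2 * (x - s * u) * sin (2 * (s * v) * (x - s * u)) + 2 * (s * v) * cos (2 * (s * v) * (x - s * u))).

Definition gauss_envelope (x : R) : R := exp (- x ^ 2 / 2 + (u ^ 2 + v ^ 2)).

Lemma is_derive_gauss_shift_re (s x : R) : is_derive (gauss_shift_re s) x (gauss_shift_re_dx s x).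
Proof. unfold gauss_shift_re, gauss_shift_re_dx. auto_derive; [easy |]. unfold Rminus. ring. Qed.

Lemma is_derive_gauss_shift_im (s x : R) : is_derive (gauss_shift_im s) x (gauss_shift_im_dx s x).
Proof. unfold gauss_shift_im, gauss_shift_im_dx. auto_derive; [easy |]. unfold Rminus. ring. Qed.

Lemma ex_derive_gauss_shift_re_dx (s x : R) : ex_derive (gauss_shift_re_dx s) x.
Proof. unfold gauss_shift_re_dx. auto_derive. easy. Qed.

Lemma ex_derive_gauss_shift_im_dx (s x : R) : ex_derive (gauss_shift_im_dx s) x.
Proof. unfold gauss_shift_im_dx. auto_derive. easy. Qed.

(* [d/ds exp (-(x - s c)^2) = - c d/dx exp (-(x - s c)^2)] with [c = u + i v] *)
Lemma is_derive_gauss_shift_re_param (s x : R) :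
  is_derive (fun s => gauss_shift_re s x) s (- (u * gauss_shift_re_dx s x - v * gauss_shift_im_dx s x)).
Proof. unfold gauss_shift_re, gauss_shift_re_dx, gauss_shift_im_dx. auto_derive; [easy |]. unfold Rminus. ring. Qed.

Lemma is_derive_gauss_shift_im_param (s x : R) :
  is_derive (fun s => gauss_shift_im s x) s (- (u * gauss_shift_im_dx s x + v * gauss_shift_re_dx s x)).
Proof. unfold gauss_shift_im, gauss_shift_re_dx, gauss_shift_im_dx. auto_derive; [easy |]. unfold Rminus. ring. Qed.

Lemma gauss_shift_bounds (s x : R) : 0 <= s <= 1 ->
  Rabs (gauss_shift_re s x) <= gauss_envelope x /\ Rabs (gauss_shift_im s x) <= gauss_envelope x.
Proof.
  intros Hs.
  assert (Hexp : exp (- ((x - s * u) * (x - s * u)) + (s * v) * (s * v)) <= gauss_envelope x).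
  { apply exp_le_compat.
    pose proof (pow2_ge_0 (x - 2 * (s * u))). pose proof (pow2_ge_0 u). pose proof (pow2_ge_0 v).
    assert (s * s <= 1) by nra.
    assert ((s * u) * (s * u) <= u ^ 2) by nra. assert ((s * v) * (s * v) <= v ^ 2) by nra.
    nra. }
  pose proof (exp_pos (- ((x - s * u) * (x - s * u)) + (s * v) * (s * v))).
  unfold gauss_shift_re, gauss_shift_im.
  rewrite !Rabs_mult, !(Rabs_right (exp _)) by lra.
  pose proof (COS_bound (2 * (s * v) * (x - s * u))). pose proof (SIN_bound (2 * (s * v) * (x - s * u))).
  split; apply (Rle_trans _ (exp (- ((x - s * u) * (x - s * u)) + (s * v) * (s * v)) * 1)); try lra;
    apply Rmult_le_compat_l; try lra; apply Rabs_le; lra.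
Qed.

Lemma vanishes_gauss_envelope (A : R) : vanishes_at_infinity (fun x => A * gauss_envelope x).
Proof.
  intros eps Heps.
  destruct (vanishes_exp_quadratic A 0 (u ^ 2 + v ^ 2) eps Heps) as [M HM].
  exists M. intros x Hx. unfold gauss_envelope.
  replace (- x ^ 2 / 2 + (u ^ 2 + v ^ 2)) with (0 * Rabs x - x ^ 2 / 2 + (u ^ 2 + v ^ 2)) by lra.
  apply HM, Hx.
Qed.

Lemma is_RInt_gen_gauss_shift_re :
  is_RInt_gen (gauss_shift_re 1) (Rbar_locally m_infty) (Rbar_locally p_infty) (sqrt PI).
Proof.
  apply (is_RInt_gen_homotopy _ (fun s x => - (u * gauss_shift_re s x - v * gauss_shift_im s x))
           (fun s x => - (u * gauss_shift_re_dx s x - v * gauss_shift_im_dx s x))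
           (fun x => (Rabs u + Rabs v) * gauss_envelope x)).
  - exact is_derive_gauss_shift_re_param.
  - intros s x. unfold gauss_shift_re, gauss_shift_im, gauss_shift_re_dx, gauss_shift_im_dx.
    auto_derive; [easy |]. unfold Rminus. ring.
  - intros s x. unfold gauss_shift_re_dx, gauss_shift_im_dx. continuity_2d.
  - intros s x. unfold gauss_shift_re_dx, gauss_shift_im_dx. auto_derive. easy.
  - intros s x. unfold gauss_shift_re, gauss_shift_im. auto_derive. easy.
  - intros s x. eexists. apply is_derive_gauss_shift_re.
  - intros s x Hs. destruct (gauss_shift_bounds s x Hs) as [Hre Him].
    rewrite Rabs_Ropp.
    apply (Rle_trans _ _ _ (Rabs_triang _ _)). rewrite Rabs_Ropp, !Rabs_mult.
    pose proof (Rabs_pos u). pose proof (Rabs_pos v). nra.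
  - apply vanishes_gauss_envelope.
  - apply (is_RInt_gen_ext gauss); [| exact is_RInt_gen_gauss].
    apply filter_forall. intros ab x _. unfold gauss_shift_re, gauss.
    replace (2 * (0 * v) * (x - 0 * u)) with 0 by ring. rewrite cos_0, Rmult_1_r.
    apply f_equal. ring.
Qed.

Lemma is_RInt_gen_gauss_shift_im :
  is_RInt_gen (gauss_shift_im 1) (Rbar_locally m_infty) (Rbar_locally p_infty) 0.
Proof.
  apply (is_RInt_gen_homotopy _ (fun s x => - (u * gauss_shift_im s x + v * gauss_shift_re s x))
           (fun s x => - (u * gauss_shift_im_dx s x + v * gauss_shift_re_dx s x))
           (fun x => (Rabs u + Rabs v) * gauss_envelope x)).
  - exact is_derive_gauss_shift_im_param.
  - intros s x. unfold gauss_shift_re, gauss_shift_im, gauss_shift_re_dx, gauss_shift_im_dx.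
    auto_derive; [easy |]. unfold Rminus. ring.
  - intros s x. unfold gauss_shift_re_dx, gauss_shift_im_dx. continuity_2d.
  - intros s x. unfold gauss_shift_re_dx, gauss_shift_im_dx. auto_derive. easy.
  - intros s x. unfold gauss_shift_re, gauss_shift_im. auto_derive. easy.
  - intros s x. eexists. apply is_derive_gauss_shift_im.
  - intros s x Hs. destruct (gauss_shift_bounds s x Hs) as [Hre Him].
    rewrite Rabs_Ropp.
    apply (Rle_trans _ _ _ (Rabs_triang _ _)). rewrite !Rabs_mult.
    pose proof (Rabs_pos u). pose proof (Rabs_pos v). nra.
  - apply vanishes_gauss_envelope.
  - assert (Hzero := is_RInt_gen_scal (V := R_NormedModule) gauss 0 _ is_RInt_gen_gauss).
    change (scal 0 (sqrt PI)) with (0 * sqrt PI) in Hzero. rewrite Rmult_0_l in Hzero.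
    apply (is_RInt_gen_ext (fun x => scal 0 (gauss x))); [| exact Hzero].
    apply filter_forall. intros ab x _. unfold gauss_shift_im, scal. simpl. unfold mult. simpl.
    replace (2 * (0 * v) * (x - 0 * u)) with 0 by ring. rewrite sin_0. ring.
Qed.

End GaussShift.

(** * Hermite moments of complex Gaussians *)

Section ProductIntegrals.

Context {Fa Fb : (R -> Prop) -> Prop} {FFa : Filter Fa} {FFb : Filter Fb}.

Lemma is_RInt_gen_pair {U V : NormedModule R_AbsRing} (f : R -> U) (g : R -> V) (lf : U) (lg : V) :
  is_RInt_gen f Fa Fb lf -> is_RInt_gen g Fa Fb lg ->
  is_RInt_gen (V := prod_NormedModule R_AbsRing U V) (fun x => (f x, g x)) Fa Fb (lf, lg).
Proof.
  intros Hf Hg P [eps HP].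
  pose proof (Hf _ (locally_ball lf eps)) as Hf'. pose proof (Hg _ (locally_ball lg eps)) as Hg'.
  unfold filtermapi in Hf', Hg'.
  eapply (filter_imp (F := filter_prod Fa Fb)); [| exact (filter_and _ _ Hf' Hg')].
  intros ab [[yf [Hyf Bf]] [yg [Hyg Bg]]].
  exists (yf, yg). split.
  - apply is_RInt_fct_extend_pair; assumption.
  - apply HP. split; assumption.
Qed.

Lemma is_RInt_gen_fst {U V : NormedModule R_AbsRing} (f : R -> U * V) (l : U * V) :
  is_RInt_gen (V := prod_NormedModule R_AbsRing U V) f Fa Fb l ->
  is_RInt_gen (fun x => fst (f x)) Fa Fb (fst l).
Proof.
  intros Hf P [eps HP].
  eapply (filter_imp (F := filter_prod Fa Fb)); [| apply (Hf (fun y => P (fst y))); exists eps; intros y [Hy _]; apply HP, Hy].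
  intros ab [y [Hy HPy]]. exists (fst y). split; [apply is_RInt_fct_extend_fst, Hy | exact HPy].
Qed.

Lemma is_RInt_gen_snd {U V : NormedModule R_AbsRing} (f : R -> U * V) (l : U * V) :
  is_RInt_gen (V := prod_NormedModule R_AbsRing U V) f Fa Fb l ->
  is_RInt_gen (fun x => snd (f x)) Fa Fb (snd l).
Proof.
  intros Hf P [eps HP].
  eapply (filter_imp (F := filter_prod Fa Fb)); [| apply (Hf (fun y => P (snd y))); exists eps; intros y [_ Hy]; apply HP, Hy].
  intros ab [y [Hy HPy]]. exists (snd y). split; [apply is_RInt_fct_extend_snd, Hy | exact HPy].
Qed.

Lemma is_RInt_gen_Cmult (K : C) (f : R -> C) (l : C) :
  is_RInt_gen f Fa Fb l -> is_RInt_gen (fun x => Cmult K (f x)) Fa Fb (Cmult K l).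
Proof.
  intros Hf.
  pose proof (is_RInt_gen_fst f l Hf) as H1. pose proof (is_RInt_gen_snd f l Hf) as H2.
  apply (is_RInt_gen_pair (U := R_NormedModule) (V := R_NormedModule)).
  - apply (is_RInt_gen_minus (V := R_NormedModule)); apply (is_RInt_gen_scal (V := R_NormedModule)); assumption.
  - apply (is_RInt_gen_plus (V := R_NormedModule)); apply (is_RInt_gen_scal (V := R_NormedModule)); assumption.
Qed.

Lemma is_RInt_gen_sum_n {V : NormedModule R_AbsRing} (g : nat -> R -> V) (l : nat -> V) (n : nat) :
  (forall j, is_RInt_gen (g j) Fa Fb (l j)) ->
  is_RInt_gen (fun x => sum_n (fun j => g j x) n) Fa Fb (sum_n l n).
Proof.
  intros Hg. induction n as [|n IH].
  - rewrite sum_O. apply (is_RInt_gen_ext (g 0%nat)); [| apply Hg].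
    apply filter_forall. intros ab x _. rewrite sum_O. reflexivity.
  - rewrite sum_Sn. apply (is_RInt_gen_ext (fun x => plus (sum_n (fun j => g j x) n) (g (S n) x))).
    + apply filter_forall. intros ab x _. rewrite sum_Sn. reflexivity.
    + apply is_RInt_gen_plus; [exact IH | apply Hg].
Qed.

End ProductIntegrals.

Lemma norm_pair_le (a b : R) :
  norm (K := R_AbsRing) (V := prod_NormedModule R_AbsRing R_NormedModule R_NormedModule) (a, b)
  <= Rabs a + Rabs b.
Proof.
  change (sqrt (Rabs a ^ 2 + Rabs b ^ 2) <= Rabs a + Rabs b).
  rewrite <- (sqrt_pow2 (Rabs a + Rabs b)) by (pose proof (Rabs_pos a); pose proof (Rabs_pos b); lra).
  apply sqrt_le_1_alt. pose proof (Rabs_pos a). pose proof (Rabs_pos b). nra.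
Qed.

Definition gauss_shift (c : C) (x : R) : C :=
  cexp (Copp (Cmult (Cminus (RtoC x) c) (Cminus (RtoC x) c))).

Lemma gauss_shift_components (c : C) (x : R) :
  gauss_shift c x = (gauss_shift_re (fst c) (snd c) 1 x, gauss_shift_im (fst c) (snd c) 1 x).
Proof.
  destruct c as [u v].
  unfold gauss_shift, gauss_shift_re, gauss_shift_im, cexp. simpl.
  f_equal; f_equal; [f_equal | f_equal | f_equal | f_equal]; ring.
Qed.

(* Integration by parts: [H_{k+1} g = 2c H_k g - (H_k g)'] for [g = exp (-(x - c)^2)], [c = u + i v]. *)
Lemma is_RInt_hermite_gauss_shift_S (u v : R) (k : nat) (a b : R) (I : C) :
  is_RInt (fun x => Cmult (Cmult (RtoC 2) (u, v)) (Cmult (RtoC (hermite k x)) (gauss_shift (u, v) x))) a b I ->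
  is_RInt (fun x => Cmult (RtoC (hermite (S k) x)) (gauss_shift (u, v) x)) a b
    (minus I (hermite k b * gauss_shift_re u v 1 b - hermite k a * gauss_shift_re u v 1 a,
              hermite k b * gauss_shift_im u v 1 b - hermite k a * gauss_shift_im u v 1 a)).
Proof.
  intros HI.
  assert (Hparts : forall (w w_dx : R -> R -> R), (forall x, is_derive (w 1) x (w_dx 1 x)) ->
                     (forall x, ex_derive (w_dx 1) x) ->
             is_RInt (fun x => hermite_deriv k x * w 1 x + hermite k x * w_dx 1 x) a b
               (hermite k b * w 1 b - hermite k a * w 1 a)).
  { intros w w_dx Hw Hw_dx. apply is_RInt_product_rule; auto using is_derive_hermite, ex_derive_hermite_deriv. }
  refine (is_RInt_ext _ _ _ _ _ _
            (is_RInt_minus _ _ _ _ _ _ HI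
               (is_RInt_fct_extend_pair (U := R_NormedModule) (V := R_NormedModule) (fun x => (_, _)) a b _ _
                  (Hparts _ _ (is_derive_gauss_shift_re u v 1) (ex_derive_gauss_shift_re_dx u v 1))
                  (Hparts _ _ (is_derive_gauss_shift_im u v 1) (ex_derive_gauss_shift_im_dx u v 1))))).
  intros x _. rewrite gauss_shift_components, hermite_S.
  unfold minus, plus, opp, Cmult, RtoC. simpl. unfold prod_plus, prod_opp, plus, opp. simpl.
  unfold gauss_shift_re, gauss_shift_im, gauss_shift_re_dx, gauss_shift_im_dx.
  f_equal; ring.
Qed.

Lemma is_RInt_gen_hermite_gauss_shift_S (u v : R) (k : nat) (l : C) :
  is_RInt_gen (fun x => Cmult (RtoC (hermite k x)) (gauss_shift (u, v) x))
    (Rbar_locally m_infty) (Rbar_locally p_infty) l ->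
  is_RInt_gen (fun x => Cmult (RtoC (hermite (S k) x)) (gauss_shift (u, v) x))
    (Rbar_locally m_infty) (Rbar_locally p_infty) (Cmult (Cmult (RtoC 2) (u, v)) l).
Proof.
  intros IH.
  apply (is_RInt_gen_boundary _ (fun x => Cmult (Cmult (RtoC 2) (u, v)) (Cmult (RtoC (hermite k x)) (gauss_shift (u, v) x)))
           (fun x => (- (hermite k x * gauss_shift_re u v 1 x), - (hermite k x * gauss_shift_im u v 1 x)))).
  - destruct (hermite_growth k) as [A [HA HAk]].
    apply (vanishes_at_infinity_le _ (fun x => 2 * A * exp (INR k * Rabs x - x ^ 2 / 2 + (u ^ 2 + v ^ 2))));
      [| apply vanishes_exp_quadratic].
    intros x. eapply Rle_trans; [apply norm_pair_le |]. rewrite !Rabs_Ropp.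
    destruct (gauss_shift_bounds u v 1 x ltac:(lra)) as [Hre Him].
    replace (INR k * Rabs x - x ^ 2 / 2 + (u ^ 2 + v ^ 2)) with (INR k * Rabs x + (- x ^ 2 / 2 + (u ^ 2 + v ^ 2))) by lra.
    rewrite exp_plus. fold (gauss_envelope u v x).
    pose proof (HAk x). pose proof (Rabs_pos (hermite k x)).
    pose proof (Rabs_pos (gauss_shift_re u v 1 x)). pose proof (Rabs_pos (gauss_shift_im u v 1 x)).
    rewrite !Rabs_mult. nra.
  - intros a b I HI.
    replace (plus I _) with (minus I (hermite k b * gauss_shift_re u v 1 b - hermite k a * gauss_shift_re u v 1 a,
                                      hermite k b * gauss_shift_im u v 1 b - hermite k a * gauss_shift_im u v 1 a)).
    + apply is_RInt_hermite_gauss_shift_S, HI.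
    + destruct I as [i1 i2]. unfold minus, plus, opp. simpl. unfold prod_plus, prod_opp, plus, opp. simpl.
      f_equal; ring.
  - apply is_RInt_gen_Cmult, IH.
Qed.

Theorem is_RInt_gen_hermite_gauss_shift (c : C) (k : nat) :
  is_RInt_gen (fun x => Cmult (RtoC (hermite k x)) (gauss_shift c x))
    (Rbar_locally m_infty) (Rbar_locally p_infty)
    (Cmult (RtoC (sqrt PI)) (cpow (Cmult (RtoC 2) c) k)).
Proof.
  destruct c as [u v].
  induction k as [|k IH].
  - apply (is_RInt_gen_ext (fun x => (gauss_shift_re u v 1 x, gauss_shift_im u v 1 x))).
    { apply filter_forall. intros ab x _.
      rewrite gauss_shift_components, hermite_0. unfold Cmult, RtoC. simpl. f_equal; ring. }
    replace (Cmult (RtoC (sqrt PI)) (cpow (Cmult (RtoC 2) (u, v)) 0)) with (sqrt PI, 0)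
      by (unfold Cmult, RtoC; simpl; f_equal; ring).
    apply is_RInt_gen_pair; [apply is_RInt_gen_gauss_shift_re | apply is_RInt_gen_gauss_shift_im].
  - replace (Cmult (RtoC (sqrt PI)) (cpow (Cmult (RtoC 2) (u, v)) (S k)))
      with (Cmult (Cmult (RtoC 2) (u, v)) (Cmult (RtoC (sqrt PI)) (cpow (Cmult (RtoC 2) (u, v)) k)))
      by (simpl; ring).
    apply is_RInt_gen_hermite_gauss_shift_S, IH.
Qed.

(** * The Bargmann transform *)

Lemma sqrt2_sq : sqrt 2 ^ 2 = 2.
Proof. apply pow2_sqrt. lra. Qed.

Lemma inv_sqrt2 : / sqrt 2 = sqrt 2 / 2.
Proof.
  assert (Hpos : 0 < sqrt 2) by (apply sqrt_lt_R0; lra).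
  pose proof sqrt2_sq. field_simplify_eq; [simpl in *; lra | lra].
Qed.

Ltac sqrt2_ring :=
  rewrite ?inv_sqrt2; unfold Rdiv; ring_simplify;
  replace (sqrt 2 ^ 4) with (sqrt 2 ^ 2 * sqrt 2 ^ 2) by ring;
  replace (sqrt 2 ^ 3) with (sqrt 2 ^ 2 * sqrt 2) by ring;
  rewrite ?sqrt2_sq; field.

Lemma cexp_plus (a b : C) : cexp (Cplus a b) = Cmult (cexp a) (cexp b).
Proof.
  destruct a as [a1 a2], b as [b1 b2]. unfold cexp, Cplus, Cmult. simpl.
  rewrite exp_plus, cos_plus, sin_plus. f_equal; ring.
Qed.

Lemma cexp_RtoC (r : R) : cexp (RtoC r) = RtoC (exp r).
Proof. unfold cexp, RtoC. simpl. rewrite cos_0, sin_0. f_equal; ring. Qed.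

Lemma cpow_scal (r : R) (y : C) (k : nat) : cpow (Cmult (RtoC r) y) k = Cmult (RtoC (r ^ k)) (cpow y k).
Proof.
  induction k as [|k IH]; simpl.
  - unfold RtoC, Cmult. simpl. f_equal; ring.
  - rewrite IH, RtoC_mult. ring.
Qed.

(* [bj n j] is convertible to [wave_center (freq n j)]. *)
Definition wave_center (w : R) : C := Cmult (Copp (Cmult Ci (RtoC (/ sqrt 2)))) (RtoC w).

Definition bargmann_exponent (z : C) (x : R) : C :=
  Cplus (Cmult (RtoC (-1/2)) (Cplus (Cmult z z) (RtoC (x ^ 2)))) (Cmult (RtoC (sqrt 2 * x)) z).

Lemma Cmod_wave_center_sq (w : R) : Cmod (wave_center w) ^ 2 = w ^ 2 / 2.
Proof.
  unfold Cmod. rewrite pow2_sqrt by (apply Rplus_le_le_0_compat; apply pow2_ge_0).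
  unfold wave_center, Cmult, Copp, Ci, RtoC. simpl. sqrt2_ring.
Qed.

(* completing the square in the Bargmann kernel *)
Lemma bargmann_exponent_square (z : C) (w x : R) :
  Cplus (Cplus (bargmann_exponent z x) (RtoC (- x ^ 2 / 2))) (Cmult Ci (RtoC (w * x)))
  = Cplus (Cminus (Cmult z (Cconj (wave_center w))) (RtoC (Cmod (wave_center w) ^ 2 / 2)))
          (Copp (Cmult (Cminus (RtoC x) (Cmult (RtoC (/ sqrt 2)) (Cminus z (wave_center w))))
                       (Cminus (RtoC x) (Cmult (RtoC (/ sqrt 2)) (Cminus z (wave_center w)))))).
Proof.
  rewrite Cmod_wave_center_sq. destruct z as [z1 z2].
  unfold bargmann_exponent, wave_center, Cplus, Cminus, Cmult, Copp, Cconj, Ci, RtoC. simpl.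
  f_equal; sqrt2_ring.
Qed.

Lemma sqrt_pow (x : R) (k : nat) : 0 <= x -> sqrt (x ^ k) = sqrt x ^ k.
Proof.
  intros Hx. induction k as [|k IH]; simpl; [apply sqrt_1 |].
  rewrite sqrt_mult by (try apply pow_le; lra). rewrite IH. reflexivity.
Qed.

Lemma Rpower_PI_quarter : Rpower PI (- (1 / 4)) * sqrt PI = sqrt (sqrt PI).
Proof.
  pose proof PI_RGT_0 as Hpi.
  rewrite <- (Rpower_sqrt PI Hpi), <- (Rpower_sqrt (Rpower PI (/ 2))) by apply exp_pos.
  rewrite Rpower_mult, <- Rpower_plus. f_equal. field.
Qed.

Lemma bargmann_hermite_constant (k : nat) :
  Rpower PI (- (1 / 4)) * / sqrt (2 ^ k * INR (Factorial.fact k) * sqrt PI) * sqrt PI * sqrt 2 ^ k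
  = / sqrt (INR (Factorial.fact k)).
Proof.
  pose proof PI_RGT_0 as Hpi.
  assert (HsPI : 0 < sqrt PI) by (apply sqrt_lt_R0; lra).
  assert (Hs4 : 0 < sqrt (sqrt PI)) by (apply sqrt_lt_R0; lra).
  assert (Hfact : 0 < sqrt (INR (Factorial.fact k))) by (apply sqrt_lt_R0, INR_fact_lt_0).
  assert (H2k : 0 < sqrt 2 ^ k) by (apply pow_lt, sqrt_lt_R0; lra).
  pose proof (INR_fact_lt_0 k). pose proof (pow_le 2 k ltac:(lra)).
  rewrite !sqrt_mult, sqrt_pow by (try apply Rmult_le_pos; lra).
  replace (Rpower PI (- (1 / 4)) * / (sqrt 2 ^ k * sqrt (INR (Factorial.fact k)) * sqrt (sqrt PI)) * sqrt PI * sqrt 2 ^ k)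
    with (Rpower PI (- (1 / 4)) * sqrt PI / (sqrt (INR (Factorial.fact k)) * sqrt (sqrt PI)))
    by (field; lra).
  rewrite Rpower_PI_quarter. field. lra.
Qed.

Definition hermite_wave (k : nat) (w x : R) : C :=
  Cmult (RtoC (hermite_fn k x)) (cexp (Cmult Ci (RtoC (w * x)))).

Definition wave_shift (z : C) (w : R) : C := Cmult (RtoC (/ sqrt 2)) (Cminus z (wave_center w)).

Lemma bargmann_integrand_hermite_wave (k : nat) (w : R) (z : C) (x : R) :
  bargmann_integrand (hermite_wave k w) z x
  = Cmult (Cmult (RtoC (Rpower PI (- (1 / 4)) * / sqrt (2 ^ k * INR (Factorial.fact k) * sqrt PI)))
                 (fock_kernel (wave_center w) z))
          (Cmult (RtoC (hermite k x)) (gauss_shift (wave_shift z w) x)).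
Proof.
  unfold bargmann_integrand, hermite_wave, hermite_fn, fock_kernel, gauss_shift, wave_shift.
  fold (bargmann_exponent z x).
  assert (Hsquare := f_equal cexp (bargmann_exponent_square z w x)).
  rewrite !cexp_plus in Hsquare.
  rewrite !RtoC_mult in Hsquare. rewrite !RtoC_mult, <- cexp_RtoC.
  match type of Hsquare with
  | ?lhs = _ =>
      transitivity (Cmult (Cmult (Cmult (RtoC (Rpower PI (- (1 / 4))))
                                        (RtoC (/ sqrt (2 ^ k * INR (Factorial.fact k) * sqrt PI))))
                                 (RtoC (hermite k x))) lhs)
  end.
  - ring.
  - rewrite Hsquare. ring.
Qed.

Theorem is_bargmann_hermite_wave (k : nat) (w : R) (z : C) :
  is_bargmann (hermite_wave k w) z
    (Cmult (fock_kernel (wave_center w) z) (ek k (Cminus z (wave_center w)))).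
Proof.
  unfold is_bargmann.
  eapply is_RInt_gen_ext.
  { apply filter_forall. intros ab x _. symmetry. apply bargmann_integrand_hermite_wave. }
  replace (Cmult (fock_kernel (wave_center w) z) (ek k (Cminus z (wave_center w))))
    with (Cmult (Cmult (RtoC (Rpower PI (- (1 / 4)) * / sqrt (2 ^ k * INR (Factorial.fact k) * sqrt PI)))
                       (fock_kernel (wave_center w) z))
                (Cmult (RtoC (sqrt PI)) (cpow (Cmult (RtoC 2) (wave_shift z w)) k))).
  - apply is_RInt_gen_Cmult, is_RInt_gen_hermite_gauss_shift.
  - replace (Cmult (RtoC 2) (wave_shift z w)) with (Cmult (RtoC (sqrt 2)) (Cminus z (wave_center w))).
    + rewrite cpow_scal. unfold ek.
      assert (Hc := f_equal RtoC (bargmann_hermite_constant k)). rewrite !RtoC_mult in Hc.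
      rewrite <- Hc, !RtoC_mult. ring.
    + unfold wave_shift. rewrite Cmult_assoc, <- RtoC_mult, inv_sqrt2.
      f_equal. f_equal. field.
Qed.

Lemma Cmult_sum_n (a : C) (u : nat -> C) (n : nat) :
  Cmult a (sum_n u n) = sum_n (fun j => Cmult a (u j)) n.
Proof. symmetry. exact (sum_n_mult_l (K := C_Ring) a u n). Qed.

Lemma sum_n_ext_C (u v : nat -> C) (n : nat) :
  (forall j, u j = v j) -> sum_n u n = sum_n v n.
Proof. intros Huv. apply sum_n_ext, Huv. Qed.

Lemma bargmann_integrand_lincomb (phi : R -> C) (c : nat -> C) (f : nat -> R -> C) (n : nat) (z : C) (x : R) :
  (forall y, phi y = sum_n (fun j => Cmult (c j) (f j y)) n) ->
  bargmann_integrand phi z x = sum_n (fun j => Cmult (c j) (bargmann_integrand (f j) z x)) n.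
Proof.
  intros Hphi. unfold bargmann_integrand. rewrite Hphi, !Cmult_sum_n.
  apply sum_n_ext_C. intros j. ring.
Qed.

Lemma Htest_lincomb (k n : nat) (a x : R) :
  Htest k n a x = sum_n (fun j => Cmult (RtoC (Ccoef n a j)) (hermite_wave k (freq n j) x)) n.
Proof.
  unfold Htest, hermite_wave. rewrite Cmult_sum_n.
  apply sum_n_ext_C. intros j. ring.
Qed.

Theorem corollary3p20 (a : R) (k n : nat) (z : C) :
  1 < a -> (1 <= n)%nat ->
  is_bargmann (Htest k n a) z
    (sum_n (fun j => Cmult (RtoC (Ccoef n a j))
                     (Cmult (fock_kernel (bj n j) z) (ek k (Cminus z (bj n j))))) n)
  /\
  sum_n (fun j => Cmult (RtoC (Ccoef n a j))
                  (Cmult (fock_kernel (bj n j) z) (ek k (Cminus z (bj n j))))) n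
  = sum_n (fun j => Cmult (RtoC (Ccoef n a j)) (weyl (bj n j) (ek k) z)) n.
Proof.
  intros _ _. split.
  - unfold is_bargmann.
    apply (is_RInt_gen_ext (fun x => sum_n (fun j => Cmult (RtoC (Ccoef n a j))
                                     (bargmann_integrand (hermite_wave k (freq n j)) z x)) n)).
    { apply filter_forall. intros ab x _. symmetry.
      apply bargmann_integrand_lincomb, Htest_lincomb. }
    apply (is_RInt_gen_sum_n (V := prod_NormedModule R_AbsRing R_NormedModule R_NormedModule)
             (fun j x => Cmult (RtoC (Ccoef n a j)) (bargmann_integrand (hermite_wave k (freq n j)) z x))
             (fun j => Cmult (RtoC (Ccoef n a j)) (Cmult (fock_kernel (bj n j) z) (ek k (Cminus z (bj n j)))))).
    intros j. apply is_RInt_gen_Cmult, (is_bargmann_hermite_wave k (freq n j) z).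
  - apply sum_n_ext_C. intros j. unfold weyl. rewrite (Cmult_comm (ek k _)). reflexivity.
Qed.
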